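(* For $h\in[H]$, let $\mathcal D_h$ be an offline dataset as described, with current-state and next-state marginal densities $d^D_h$ and $d^{D,\dagger}_h$. For any function $w_h:\mathcal X\to[-C^{\mathbf x}_h,C^{\mathbf x}_h]$ and any pseudo-policy $\bar\pi$ with $\bar\pi_h(a\mid x)/\pi^D_h(a\mid x)\le C^{\mathbf a}_h$ for all $x\in\mathcal X,a\in\mathcal A$, we have $\big\|\mathbf P^{\bar\pi}_h(d^D_hw_h)/d^{D,\dagger}_h\big\|_\infty\le C^{\mathbf x}_hC^{\mathbf a}_h$.
   Context: Finite-horizon MDP with measurable state space $\mathcal X$, finite action space $\mathcal A$, $[H]=\{0,\dots,H-1\}$, transitions $P_h$. Offline data: $\mathcal D_h$ consists of tuples $(x_h,a_h,x_{h+1})$ generated by an arbitrary (possibly history-dependent) roll-in to $x_h$, then $a_h\sim\pi^D_h(\cdot\mid x_h)$ for a Markov single-step policy $\pi^D_h$, then $x_{h+1}\sim P_h(\cdot\mid x_h,a_h)$; $d^D_h$, $d^{D,\dagger}_h$ are the marginal densities of $x_h$ and $x_{h+1}$. $(\mathbf P^{\bar\pi}_hd)(x'):=\iint P_h(x'\mid x,a)\bar\pi_h(a\mid x)d(x)\mathrm dx\,\mathrm da$. A pseudo-policy is $\bar\pi_h=\min\{\pi_h,C\pi^D_h\}$ for a Markov policy $\pi$ and constant $C>0$. Ratios use the convention $0/0=0$. *)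

From HB Require Import structures.
From mathcomp Require Import all_boot all_order all_algebra.
From mathcomp Require Import all_classical all_reals all_analysis.
Set Implicit Arguments. Unset Strict Implicit. Unset Printing Implicit Defensive.
Import Order.TTheory GRing.Theory Num.Theory.
Local Open Scope ring_scope.
Local Open Scope classical_set_scope.

Section Defs.
Context {R : realType} {dX : measure_display} {X : measurableType dX} {A : finType}.

Definition is_policy (pi : X -> A -> R) : Prop :=
  (forall x a, 0 <= pi x a) /\ (forall x, \sum_(a : A) pi x a = 1) /\
  (forall a, measurable_fun setT (fun x => pi x a)).

Definition pseudo_policy (pi piD : X -> A -> R) (C : R) : X -> A -> R :=
  fun x a => Num.min (pi x a) (C * piD x a).

(* Transition kernel given by densities: P x a x' = P(x' | x, a) w.r.t. mu. *)
Definition is_transition_density (mu : {measure set X -> \bar R})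
    (P : X -> A -> X -> R) : Prop :=
  (forall x a x', 0 <= P x a x') /\
  (forall x a, (\int[mu]_x' (P x a x')%:E = 1)%E) /\
  (forall a x', measurable_fun setT (fun x => P x a x')) /\
  (forall x a, measurable_fun setT (P x a)).

Definition is_density (mu : {measure set X -> \bar R}) (d : X -> R) : Prop :=
  (forall x, 0 <= d x) /\ measurable_fun setT d /\ (\int[mu]_x (d x)%:E = 1)%E.

Definition Pop (mu : {measure set X -> \bar R}) (P : X -> A -> X -> R)
    (pib : X -> A -> R) (d : X -> R) : X -> \bar R :=
  fun x' => (\int[mu]_x (\sum_(a : A) P x a x' * pib x a * d x)%:E)%E.

(* |num / den| with the convention 0/0 = 0 (and c/0 = +oo for c <> 0). *)
Definition eratio (num den : \bar R) : \bar R :=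
  if den == 0%E then (if num == 0%E then 0%E else +oo%E) else (`|num| * den^-1)%E.

Definition sup_ratio (num den : X -> \bar R) : \bar R :=
  ereal_sup [set eratio (num x) (den x) | x in [set: X]].

End Defs.

From HB Require Import structures.
From mathcomp Require Import all_boot all_order all_algebra.
From mathcomp Require Import all_classical all_reals all_analysis.
From mathcomp Require Import ring lra measurable_realfun.
Import Order.TTheory GRing.Theory Num.Theory.
Local Open Scope ring_scope.
Local Open Scope classical_set_scope.

(* The pseudo-policy satisfies [pibar <= Ca piD] pointwise and [|w| <= Cx], so the
   integrand of [P^pibar (dD w)] is dominated by [Cx Ca] times the (nonnegative)
   integrand of [P^piD dD], which is the next-state marginal. Integrating gives
   [|P^pibar (dD w)| <= Cx Ca dD^dagger] at every state, and this bounds each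
   ratio, including the degenerate cases [dD^dagger = 0] and [dD^dagger = +oo]. *)

Section PseudoPolicy.
Context {R : realType} {dX : measure_display} {X : measurableType dX} {A : finType}.
Context { pi piD : X -> A -> R } { C : R }.

Lemma pseudo_policy_ge0 :
  (forall x a, 0 <= pi x a) -> (forall x a, 0 <= piD x a) -> 0 <= C ->
  forall x a, 0 <= pseudo_policy pi piD C x a.
Proof. by move=> pi0 piD0 C0 x a; rewrite le_min pi0 mulr_ge0. Qed.

(* Where [piD x a = 0] the ratio is [0] by convention, but the pseudo-policy is
   then [min (pi x a) 0 <= 0] anyway. *)
Lemma pseudo_policy_le_scale (c : R) x a :
  0 <= piD x a -> pseudo_policy pi piD C x a / piD x a <= c ->
  pseudo_policy pi piD C x a <= c * piD x a.
Proof.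
move=> piD0; have [piD_eq0 _|piD_neq0] := eqVneq (piD x a) 0.
  by rewrite /pseudo_policy piD_eq0 !mulr0 ge_min lexx orbT.
by rewrite -ler_pdivrMr // lt_def piD_neq0.
Qed.

Lemma measurable_pseudo_policy :
  (forall a, measurable_fun setT (pi ^~ a)) ->
  (forall a, measurable_fun setT (piD ^~ a)) ->
  forall a, measurable_fun setT (fun x => pseudo_policy pi piD C x a).
Proof.
move=> pim piDm a; apply: measurable_minr => //.
exact: measurable_funM (measurable_cst C) (piDm a).
Qed.

End PseudoPolicy.

Lemma policy_exists_pos {R : realType} {dX : measure_display}
    {X : measurableType dX} {A : finType} {p : X -> A -> R} :
  is_policy p -> forall x, exists a, 0 < p x a.
Proof.
case=> [p0 [p1 _]] x.
have [|a /andP[_ pa]] := @psumr_neq0P R A predT (p x) (fun a _ => p0 x a).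
  by apply/eqP; rewrite p1 oner_neq0.
by exists a.
Qed.

Lemma eratio_le {R : realType} (c : R) (N D : \bar R) :
  0 <= c -> (0 <= D)%E -> (`|N| <= c%:E * D)%E -> (eratio N D <= c%:E)%E.
Proof.
move=> c0 D0 ND; rewrite /eratio; case: eqP => [D_eq0|D_neq0].
  move: ND; rewrite D_eq0 mule0 => N0.
  by have -> : N == 0%E by rewrite -abse_eq0 eq_le N0 abse_ge0.
move: D D0 D_neq0 ND => [r| |] //= r0 r_neq0; last by rewrite invey mule0.
have r_gt0 : 0 < r.
  by rewrite lt_def -lee_fin r0 andbT; apply/eqP => r_eq0; apply: r_neq0; rewrite r_eq0.
rewrite inver gt_eqF //; case: N => [n| |] //=.
by rewrite -!EFinM !lee_fin ler_pdivrMr.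
Qed.

Lemma abse_integral_le_scale {R : realType} {d : measure_display}
    {T : measurableType d} (mu : {measure set T -> \bar R}) (D : set T)
    (f g : T -> R) (c : R) :
  measurable D -> measurable_fun D f -> measurable_fun D g ->
  0 <= c -> (forall x, D x -> 0 <= g x) -> (forall x, D x -> `|f x| <= c * g x) ->
  (`|\int[mu]_(x in D) (f x)%:E| <= c%:E * \int[mu]_(x in D) (g x)%:E)%E.
Proof.
move=> mD mf mg c0 g0 fg.
have mfE : measurable_fun D (EFin \o f) by apply/measurable_EFinP.
have mgE : measurable_fun D (EFin \o g) by apply/measurable_EFinP.
apply: le_trans (le_abse_integral _ _ mfE) _ => //.
rewrite -ge0_integralZl //.
apply: ge0_le_integral => //.
- exact: measurableT_comp mfE.
- by apply/measurable_EFinP; exact: measurable_funM.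
Qed.

Section NextStateOperator.
Context {R : realType} {dX : measure_display} {X : measurableType dX} {A : finType}.
Variables (mu : {measure set X -> \bar R}) (P : X -> A -> X -> R).
Hypothesis P_ge0 : forall x a x', 0 <= P x a x'.
Hypothesis P_measurable : forall a x', measurable_fun setT (fun x => P x a x').

Lemma measurable_Pop_integrand (pib : X -> A -> R) (d : X -> R) x' :
  (forall a, measurable_fun setT (pib ^~ a)) -> measurable_fun setT d ->
  measurable_fun setT (fun x => \sum_(a : A) P x a x' * pib x a * d x).
Proof.
move=> pibm dm; apply: measurable_sum => a.
by apply: measurable_funM => //; exact: measurable_funM.
Qed.

Lemma Pop_ge0 (pib : X -> A -> R) (d : X -> R) x' :
  (forall x a, 0 <= pib x a) -> (forall x, 0 <= d x) -> (0 <= Pop mu P pib d x')%E.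
Proof.
move=> pib0 d0; apply: integral_ge0 => x _; rewrite lee_fin.
by apply: sumr_ge0 => a _; rewrite !mulr_ge0.
Qed.

Lemma abse_Pop_le (pib piD : X -> A -> R) (d w : X -> R) (cx ca : R) x' :
  (forall a, measurable_fun setT (pib ^~ a)) ->
  (forall a, measurable_fun setT (piD ^~ a)) ->
  measurable_fun setT d -> measurable_fun setT w ->
  (forall x a, 0 <= pib x a) -> (forall x a, 0 <= piD x a) ->
  (forall x a, pib x a <= ca * piD x a) ->
  (forall x, 0 <= d x) -> (forall x, `|w x| <= cx) -> 0 <= cx * ca ->
  (`|Pop mu P pib (fun x => (d x * w x)%R) x'| <= (cx * ca)%:E * Pop mu P piD d x')%E.
Proof.
move=> pibm piDm dm wm pib0 piD0 pib_le d0 w_le c0.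
apply: abse_integral_le_scale => //.
- by apply: measurable_Pop_integrand => //; exact: measurable_funM.
- exact: measurable_Pop_integrand.
- by move=> x _; apply: sumr_ge0 => a _; rewrite !mulr_ge0.
move=> x _; apply: le_trans (ler_norm_sum _ _ _) _.
rewrite mulr_sumr; apply: ler_sum => a _.
rewrite !normrM (ger0_norm (P_ge0 _ _ _)) (ger0_norm (pib0 _ _)) (ger0_norm (d0 _)).
have -> : cx * ca * (P x a x' * piD x a * d x)
  = P x a x' * (ca * piD x a) * (d x * cx) by ring.
by rewrite ler_pM ?mulr_ge0 ?ler_wpM2l.
Qed.

End NextStateOperator.

Theorem lemma10 (R : realType) (dX : measure_display) (X : measurableType dX)
  (A : finType) (mu : {measure set X -> \bar R}) (H : nat)
  (P : 'I_H -> X -> A -> X -> R)            (* P h x a x' = P_h(x' | x, a) *)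
  (piD : 'I_H -> X -> A -> R)               (* data policy pi^D_h(a | x) *)
  (dD : 'I_H -> X -> R)                     (* marginal density d^D_h of x_h *)
  (h : 'I_H)
  (HP : is_transition_density mu (P h))
  (HpiD : is_policy (piD h))
  (HdD : is_density mu (dD h))
  (Cx Ca : R) (w : X -> R)
  (Hwm : measurable_fun setT w)
  (Hw : forall x, - Cx <= w x <= Cx)
  (pi : X -> A -> R) (Hpi : is_policy pi) (C : R) (HC : 0 < C)
  (Hratio : forall x a, pseudo_policy pi (piD h) C x a / piD h x a <= Ca) :
  let pibar := pseudo_policy pi (piD h) C in
  let dDdag := Pop mu (P h) (piD h) (dD h) in   (* next-state marginal density d^{D,dagger}_h *)
  (sup_ratio (Pop mu (P h) pibar (fun x => (dD h x * w x)%R)) dDdag <= (Cx * Ca)%:E)%E.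
Proof.
have [P0 [_ [Pm _]]] := HP.
have [piD0 [_ piDm]] := HpiD.
have [pi0 [_ pim]] := Hpi.
have [dD0 [dDm _]] := HdD.
have pibar0 := pseudo_policy_ge0 pi0 piD0 (ltW HC).
apply: ge_ereal_sup => _ [x' _ <-].
have Cx0 : 0 <= Cx by have /andP[] := Hw x'; lra.
have Ca0 : 0 <= Ca.
  have [a _] := policy_exists_pos HpiD x'.
  by apply: le_trans (Hratio x' a); rewrite divr_ge0.
apply: eratio_le.
- exact: mulr_ge0.
- exact: Pop_ge0.
- apply: abse_Pop_le => //.
  + exact: measurable_pseudo_policy.
  + by move=> x a; apply: pseudo_policy_le_scale.
  + by move=> x; rewrite ler_norml Hw.
  + exact: mulr_ge0.
Qed.
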